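(* Let $M$ be a path-connected pre-$\Delta$-monoid with identity $e$. If $M$ does not have well-defined infinite $\pi_1$-products at $e$, then $M$ does not have well-defined infinite $\pi_1$-products at any of its points.
   Context: A pre-$\Delta$-monoid is a space $M$ with an associative operation $\ast$ with identity $e$ such that for any continuous paths $\alpha,\beta:[0,1]\to M$, the pointwise product $t\mapsto\alpha(t)\ast\beta(t)$ is continuous. A sequence of loops $\alpha_n\in\Omega(X,x)$ is a null-sequence if every neighborhood of $x$ contains $\mathrm{Im}(\alpha_n)$ for all but finitely many $n$; its infinite concatenation $\prod_{n=1}^\infty\alpha_n$ is the loop equal to (a linear reparametrization of) $\alpha_n$ on $[\frac{n-1}{n},\frac{n}{n+1}]$ and sending $1$ to $x$. $X$ has well-defined infinite $\pi_1$-products at $x$ if for all null-sequences $\alpha_n,\beta_n\in\Omega(X,x)$ with $\alpha_n\simeq\beta_n$ (path-homotopic) for every $n$, we have $\prod_{n=1}^\infty\alpha_n\simeq\prod_{n=1}^\infty\beta_n$. *)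

From Stdlib Require Import Reals ZArith.
Open Scope R_scope.

Record TopSpace := {
  carrier :> Type;
  isOpen : (carrier -> Prop) -> Prop;
  open_full : isOpen (fun _ => True);
  open_empty : isOpen (fun _ => False);
  open_inter : forall U V, isOpen U -> isOpen V -> isOpen (fun x => U x /\ V x);
  open_union : forall F : (carrier -> Prop) -> Prop,
      (forall U, F U -> isOpen U) -> isOpen (fun x => exists U, F U /\ U x)
}.

Definition unit_I (t : R) : Prop := 0 <= t <= 1.

(** A path in X: a map R -> X whose restriction to [0,1] is continuous
    (for the standard subspace topology of [0,1]). Values outside [0,1]
    are irrelevant. *)
Definition is_path (X : TopSpace) (a : R -> X) : Prop :=
  forall t, unit_I t -> forall U, isOpen X U -> U (a t) ->
    exists eps, 0 < eps /\
      forall s, unit_I s -> Rabs (s - t) < eps -> U (a s).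

Definition is_loop (X : TopSpace) (x : X) (a : R -> X) : Prop :=
  is_path X a /\ a 0 = x /\ a 1 = x.

Definition cont_on_square (X : TopSpace) (H : R -> R -> X) : Prop :=
  forall s t, unit_I s -> unit_I t -> forall U, isOpen X U -> U (H s t) ->
    exists eps, 0 < eps /\
      forall s' t', unit_I s' -> unit_I t' ->
        Rabs (s' - s) < eps -> Rabs (t' - t) < eps -> U (H s' t').

Definition path_homotopic (X : TopSpace) (a b : R -> X) : Prop :=
  exists H : R -> R -> X, cont_on_square X H /\
    (forall s, unit_I s -> H s 0 = a s) /\
    (forall s, unit_I s -> H s 1 = b s) /\
    (forall t, unit_I t -> H 0 t = a 0) /\
    (forall t, unit_I t -> H 1 t = a 1).

(** Null-sequence of loops at x (indexed from 0; the paper's alpha_{n+1}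
    is our alpha n). *)
Definition null_seq (X : TopSpace) (x : X) (alpha : nat -> R -> X) : Prop :=
  (forall n, is_loop X x (alpha n)) /\
  forall U, isOpen X U -> U x ->
    exists N, forall n, (N <= n)%nat -> forall t, unit_I t -> U (alpha n t).

(** Infinite concatenation: on [n/(n+1), (n+1)/(n+2)] it is the linear
    reparametrization of alpha n (the paper's alpha_{n+1} on
    [(m-1)/m, m/(m+1)] with m = n+1); 1 is sent to x. For t < 1 the index
    is n = floor(t/(1-t)), i.e. the n with n/(n+1) <= t < (n+1)/(n+2). *)
Definition inf_concat (X : TopSpace) (x : X) (alpha : nat -> R -> X) (t : R) : X :=
  if Rlt_dec t 1 then
    let n := Z.to_nat (Int_part (t / (1 - t))) in
    alpha n ((t - INR n / INR (n + 1)) * (INR (n + 1) * INR (n + 2)))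
  else x.

Definition wd_inf_products (X : TopSpace) (x : X) : Prop :=
  forall alpha beta : nat -> R -> X,
    null_seq X x alpha -> null_seq X x beta ->
    (forall n, path_homotopic X (alpha n) (beta n)) ->
    path_homotopic X (inf_concat X x alpha) (inf_concat X x beta).

Definition path_connected (X : TopSpace) : Prop :=
  forall a b : X, exists p : R -> X, is_path X p /\ p 0 = a /\ p 1 = b.

Definition pre_delta_monoid (M : TopSpace) (op : M -> M -> M) (e : M) : Prop :=
  (forall a b c, op a (op b c) = op (op a b) c) /\
  (forall a, op e a = a) /\ (forall a, op a e = a) /\
  (forall alpha beta : R -> M, is_path M alpha -> is_path M beta ->
     is_path M (fun t => op (alpha t) (beta t))).

(* Left multiplication by [x] sends null-sequences of loops at [e] to
   null-sequences at [x] (as [x * e = x]), preserves homotopies, and commutes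
   with infinite concatenation.  So if [alpha n ~ beta n] at [e], well-defined
   products at [x] give [x * prod alpha ~ x * prod beta].  A path [q] from [e]
   to [x] then removes the factor [x]: moving along [q] deforms a loop [g] at
   [e] into [q . (x * g) . q^-1].  All continuity facts about products of
   two-parameter maps come from the pre-Delta-monoid axiom, applied to infinite
   concatenations of shrinking probe loops. *)

From Stdlib Require Import Reals Lra Lia ZArith Classical ClassicalEpsilon.
Open Scope R_scope.

Definition seg_start (n : nat) : R := INR n / INR (n + 1).
Definition seg_rate (n : nat) : R := INR (n + 1) * INR (n + 2).
Definition seg_param (n : nat) (s : R) : R := (s - seg_start n) * seg_rate n.
Definition seg_index (t : R) : nat := Z.to_nat (Int_part (t / (1 - t))).

Lemma seg_start_eq n : seg_start n = INR n / (INR n + 1).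
Proof. unfold seg_start; rewrite plus_INR; simpl; lra. Qed.

Lemma seg_start_S_eq n : seg_start (S n) = (INR n + 1) / (INR n + 2).
Proof. unfold seg_start; rewrite plus_INR, S_INR; simpl; f_equal; ring. Qed.

Lemma seg_rate_eq n : seg_rate n = (INR n + 1) * (INR n + 2).
Proof. unfold seg_rate; rewrite !plus_INR; simpl; ring. Qed.

Lemma seg_rate_gt0 n : 0 < seg_rate n.
Proof. rewrite seg_rate_eq; pose proof (pos_INR n); nra. Qed.

Lemma seg_start0 : seg_start 0 = 0.
Proof. unfold seg_start; simpl; field. Qed.

Lemma one_minus_seg_start n : 1 - seg_start n = / (INR n + 1).
Proof. rewrite seg_start_eq; pose proof (pos_INR n); field; lra. Qed.

Lemma seg_start_ge0 n : 0 <= seg_start n.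
Proof.
  rewrite seg_start_eq; pose proof (pos_INR n).
  apply Rle_mult_inv_pos; lra.
Qed.

Lemma seg_start_lt1 n : seg_start n < 1.
Proof.
  pose proof (one_minus_seg_start n); pose proof (pos_INR n).
  pose proof (Rinv_0_lt_compat (INR n + 1)); lra.
Qed.

Lemma seg_length n : seg_start (S n) - seg_start n = / seg_rate n.
Proof.
  rewrite seg_start_S_eq, seg_start_eq, seg_rate_eq; pose proof (pos_INR n).
  field; lra.
Qed.

Lemma seg_start_lt_S n : seg_start n < seg_start (S n).
Proof.
  pose proof (seg_length n); pose proof (Rinv_0_lt_compat _ (seg_rate_gt0 n)); lra.
Qed.

Lemma seg_start_le m n : (m <= n)%nat -> seg_start m <= seg_start n.
Proof.
  induction 1; [lra|]. pose proof (seg_start_lt_S m0); lra.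
Qed.

Lemma seg_param_start n : seg_param n (seg_start n) = 0.
Proof. unfold seg_param; ring. Qed.

Lemma seg_param_end n : seg_param n (seg_start (S n)) = 1.
Proof.
  unfold seg_param; rewrite seg_length; pose proof (seg_rate_gt0 n); field; lra.
Qed.

Lemma seg_param_point n r : seg_param n (seg_start n + r / seg_rate n) = r.
Proof. unfold seg_param; pose proof (seg_rate_gt0 n); field; lra. Qed.

Lemma seg_param_unit n s :
  seg_start n <= s <= seg_start (S n) -> unit_I (seg_param n s).
Proof.
  intros Hs; pose proof (seg_param_end n); pose proof (seg_rate_gt0 n).
  unfold seg_param, unit_I in *; split; nra.
Qed.

Lemma seg_point_in n r :
  unit_I r -> seg_start n <= seg_start n + r / seg_rate n <= seg_start (S n).
Proof.
  intros [Hr0 Hr1]; pose proof (seg_length n); pose proof (seg_rate_gt0 n).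
  assert (0 <= r / seg_rate n <= / seg_rate n).
  { unfold Rdiv; split; [apply Rmult_le_pos|]; [lra| |];
      pose proof (Rinv_0_lt_compat _ (seg_rate_gt0 n)); nra. }
  lra.
Qed.

Lemma Rabs_seg_param n s t eps :
  Rabs (s - t) < eps / seg_rate n -> Rabs (seg_param n s - seg_param n t) < eps.
Proof.
  intros H; pose proof (seg_rate_gt0 n).
  replace (seg_param n s - seg_param n t) with ((s - t) * seg_rate n)
    by (unfold seg_param; ring).
  rewrite Rabs_mult, (Rabs_right (seg_rate n)) by lra.
  apply Rmult_lt_compat_r with (r := seg_rate n) in H; [|lra].
  unfold Rdiv in H; rewrite Rmult_assoc, Rinv_l, Rmult_1_r in H by lra; exact H.
Qed.

Lemma seg_index_eq n s :
  seg_start n <= s < seg_start (S n) -> seg_index s = n.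
Proof.
  intros [H1 H2]; pose proof (seg_start_lt1 (S n)); pose proof (pos_INR n).
  assert (s < 1) by lra.
  rewrite seg_start_eq in H1; rewrite seg_start_S_eq in H2.
  assert (E1 : INR n <= s / (1 - s)).
  { apply Rmult_le_reg_r with (1 - s); [lra|].
    unfold Rdiv; rewrite Rmult_assoc, Rinv_l by lra.
    apply Rmult_le_compat_r with (r := INR n + 1) in H1; [|lra].
    unfold Rdiv in H1; rewrite Rmult_assoc, Rinv_l in H1 by lra; nra. }
  assert (E2 : s / (1 - s) < INR n + 1).
  { apply Rmult_lt_reg_r with (1 - s); [lra|].
    unfold Rdiv; rewrite Rmult_assoc, Rinv_l by lra.
    apply Rmult_lt_compat_r with (r := INR n + 2) in H2; [|lra].
    unfold Rdiv in H2; rewrite Rmult_assoc, Rinv_l in H2 by lra; nra. }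
  unfold seg_index, Int_part.
  rewrite <- (tech_up (s / (1 - s)) (Z.of_nat n + 1)).
  - rewrite Z.add_simpl_r; apply Nat2Z.id.
  - rewrite plus_IZR, <- INR_IZR_INZ; simpl; lra.
  - rewrite plus_IZR, <- INR_IZR_INZ; simpl; lra.
Qed.

Lemma seg_index_spec s :
  0 <= s < 1 -> seg_start (seg_index s) <= s < seg_start (S (seg_index s)).
Proof.
  intros [H1 H2]; unfold seg_index.
  destruct (base_Int_part (s / (1 - s))) as [B1 B2].
  set (z := Int_part (s / (1 - s))) in *.
  assert (P : 0 <= s / (1 - s)) by (apply Rle_mult_inv_pos; lra).
  assert (Z0 : (0 <= z)%Z).
  { assert (IZR (-1) < IZR z) by (simpl; lra). apply lt_IZR in H; lia. }
  assert (E : INR (Z.to_nat z) = IZR z) by (rewrite INR_IZR_INZ, Z2Nat.id; auto).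
  set (n := Z.to_nat z) in *.
  assert (Q : s / (1 - s) * (1 - s) = s) by (field; lra).
  rewrite seg_start_eq, seg_start_S_eq; pose proof (pos_INR n); split.
  - apply Rmult_le_reg_r with (INR n + 1); [lra|].
    unfold Rdiv; rewrite Rmult_assoc, Rinv_l by lra; nra.
  - apply Rmult_lt_reg_r with (INR n + 2); [lra|].
    unfold Rdiv; rewrite Rmult_assoc, Rinv_l by lra; nra.
Qed.

Section InfConcat.
Variables (X : TopSpace) (x : X) (alpha : nat -> R -> X).

Lemma inf_concat_lt1 t :
  t < 1 -> inf_concat X x alpha t = alpha (seg_index t) (seg_param (seg_index t) t).
Proof. intros Ht; unfold inf_concat; destruct (Rlt_dec t 1); [reflexivity|contradiction]. Qed.

Lemma inf_concat_1 : inf_concat X x alpha 1 = x.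
Proof. unfold inf_concat; destruct (Rlt_dec 1 1); [lra|reflexivity]. Qed.

Hypothesis alpha_loop : forall n, is_loop X x (alpha n).

(* At the knot [seg_start (S n)] both adjacent loops sit at the base point. *)
Lemma inf_concat_seg n s :
  seg_start n <= s <= seg_start (S n) -> inf_concat X x alpha s = alpha n (seg_param n s).
Proof.
  intros [H1 H2]; pose proof (seg_start_lt1 (S n)); rewrite inf_concat_lt1 by lra.
  destruct (Rlt_le_dec s (seg_start (S n))).
  - rewrite (seg_index_eq n s) by lra; reflexivity.
  - assert (s = seg_start (S n)) by lra; subst s.
    rewrite (seg_index_eq (S n)) by (pose proof (seg_start_lt_S (S n)); lra).
    rewrite seg_param_start, seg_param_end.
    destruct (alpha_loop (S n)) as [_ [-> _]]; destruct (alpha_loop n) as [_ [_ ->]].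
    reflexivity.
Qed.

Lemma inf_concat_seg_point n r :
  unit_I r -> inf_concat X x alpha (seg_start n + r / seg_rate n) = alpha n r.
Proof.
  intros Hr; rewrite (inf_concat_seg n) by (apply seg_point_in; auto).
  now rewrite seg_param_point.
Qed.

Lemma inf_concat_0 : inf_concat X x alpha 0 = x.
Proof.
  pose proof (seg_start_lt_S 0); rewrite seg_start0 in *.
  rewrite (inf_concat_seg 0 0) by (rewrite seg_start0; lra).
  rewrite <- seg_start0, seg_param_start; apply alpha_loop.
Qed.

Lemma inf_concat_cont_on_seg n t U :
  seg_start n <= t <= seg_start (S n) -> isOpen X U -> U (inf_concat X x alpha t) ->
  exists eps, 0 < eps /\ forall s, unit_I s -> Rabs (s - t) < eps ->
    seg_start n <= s <= seg_start (S n) -> U (inf_concat X x alpha s).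
Proof.
  intros Ht HU HUt; rewrite (inf_concat_seg n t Ht) in HUt.
  destruct (proj1 (alpha_loop n) _ (seg_param_unit n t Ht) U HU HUt) as [e [He E]].
  pose proof (seg_rate_gt0 n).
  exists (e / seg_rate n); split; [apply Rdiv_lt_0_compat; lra|].
  intros s Hs Hd Hseg; rewrite (inf_concat_seg n s Hseg).
  apply E; [now apply seg_param_unit | now apply Rabs_seg_param].
Qed.

(* A point [t < 1] either lies inside its segment, or is [0], or is the knot
   between the segments [m] and [S m]. *)
Lemma inf_concat_cont_lt1 t U :
  0 <= t < 1 -> isOpen X U -> U (inf_concat X x alpha t) ->
  exists eps, 0 < eps /\ forall s, unit_I s -> Rabs (s - t) < eps ->
    U (inf_concat X x alpha s).
Proof.
  intros Ht HU HUt; destruct (seg_index_spec t Ht) as [Hlo Hhi].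
  set (n := seg_index t) in *.
  destruct (inf_concat_cont_on_seg n t U (conj Hlo (Rlt_le _ _ Hhi)) HU HUt)
    as [e [He E]].
  destruct (Rlt_le_dec (seg_start n) t) as [Hin|Hknot].
  - set (d := Rmin e (Rmin (t - seg_start n) (seg_start (S n) - t))).
    exists d; split; [apply Rmin_glb_lt; [|apply Rmin_glb_lt]; lra|].
    intros s Hs Hd; unfold d in Hd.
    pose proof (Rmin_l e (Rmin (t - seg_start n) (seg_start (S n) - t))).
    pose proof (Rmin_r e (Rmin (t - seg_start n) (seg_start (S n) - t))).
    pose proof (Rmin_l (t - seg_start n) (seg_start (S n) - t)).
    pose proof (Rmin_r (t - seg_start n) (seg_start (S n) - t)).
    apply E; auto; [lra|]; split_Rabs; lra.
  - assert (Ht0 : t = seg_start n) by lra; clearbody n; destruct n as [|m].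
    + exists (Rmin e (seg_start 1 - t)); split; [apply Rmin_glb_lt; lra|].
      intros s Hs Hd; pose proof (Rmin_l e (seg_start 1 - t)).
      pose proof (Rmin_r e (seg_start 1 - t)).
      apply E; auto; [lra|]; rewrite seg_start0 in *; destruct Hs; split_Rabs; lra.
    + assert (Hm : seg_start m <= t <= seg_start (S m))
        by (pose proof (seg_start_lt_S m); lra).
      destruct (inf_concat_cont_on_seg m t U Hm HU HUt) as [e' [He' E']].
      pose proof (seg_start_lt_S m); pose proof (seg_start_lt_S (S m)).
      set (d := Rmin (Rmin e (seg_start (S (S m)) - t)) (Rmin e' (t - seg_start m))).
      exists d; split; [repeat apply Rmin_glb_lt; lra|].
      intros s Hs Hd; unfold d in Hd.
      pose proof (Rmin_l (Rmin e (seg_start (S (S m)) - t)) (Rmin e' (t - seg_start m))).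
      pose proof (Rmin_r (Rmin e (seg_start (S (S m)) - t)) (Rmin e' (t - seg_start m))).
      pose proof (Rmin_l e (seg_start (S (S m)) - t)).
      pose proof (Rmin_r e (seg_start (S (S m)) - t)).
      pose proof (Rmin_l e' (t - seg_start m)); pose proof (Rmin_r e' (t - seg_start m)).
      destruct (Rle_lt_dec t s).
      * apply E; auto; [lra|]; split_Rabs; lra.
      * apply E'; auto; [lra|]; split_Rabs; lra.
Qed.
End InfConcat.

Lemma inv_INR_le N n : (0 < N)%nat -> (N <= n)%nat -> / (INR n + 1) <= / INR N.
Proof.
  intros HN Hn; apply Rinv_le_contravar; [now apply lt_0_INR|].
  apply le_INR in Hn; lra.
Qed.

Lemma inf_concat_is_path X x alpha :
  null_seq X x alpha -> is_path X (inf_concat X x alpha).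
Proof.
  intros [Hloop Hnull] t Ht U HU HUt.
  destruct (Rlt_dec t 1) as [Ht1|Ht1];
    [apply (inf_concat_cont_lt1 X x alpha Hloop); auto; split; [apply Ht|lra]|].
  assert (t = 1) by (destruct Ht; lra); subst t; rewrite inf_concat_1 in HUt.
  destruct (Hnull U HU HUt) as [N HN].
  exists (/ (INR N + 1)); split; [apply Rinv_0_lt_compat; pose proof (pos_INR N); lra|].
  intros s Hs Hd; destruct (Rlt_dec s 1) as [Hs1|Hs1].
  - destruct (seg_index_spec s) as [Hlo Hhi]; [destruct Hs; lra|].
    rewrite inf_concat_lt1 by auto; apply HN; [|apply seg_param_unit; lra].
    destruct (le_lt_dec N (seg_index s)) as [h|h]; auto; exfalso.
    pose proof (seg_start_le _ _ h); pose proof (one_minus_seg_start N).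
    rewrite Rabs_left1 in Hd by lra; lra.
  - assert (s = 1) by (destruct Hs; lra); subst s; now rewrite inf_concat_1.
Qed.

Lemma inf_concat_is_loop X x alpha :
  null_seq X x alpha -> is_loop X x (inf_concat X x alpha).
Proof.
  intros Hnull; split; [now apply inf_concat_is_path|].
  split; [apply inf_concat_0, Hnull | apply inf_concat_1].
Qed.

Definition lip_on_square (f : R -> R -> R) : Prop :=
  exists L, 0 < L /\ (forall s t, unit_I s -> unit_I t -> Rabs (f s t) <= L) /\
   (forall s t s' t', unit_I s -> unit_I t -> unit_I s' -> unit_I t' ->
      Rabs (f s' t' - f s t) <= L * (Rabs (s' - s) + Rabs (t' - t))).

Lemma Rabs_dist_ge0 s t s' t' : 0 <= Rabs (s' - s) + Rabs (t' - t).
Proof. pose proof (Rabs_pos (s' - s)); pose proof (Rabs_pos (t' - t)); lra. Qed.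

Lemma lip_on_square_const c : lip_on_square (fun _ _ => c).
Proof.
  exists (Rabs c + 1); repeat split.
  - pose proof (Rabs_pos c); lra.
  - intros; lra.
  - intros; rewrite Rminus_diag, Rabs_R0.
    pose proof (Rabs_dist_ge0 s t s' t'); pose proof (Rabs_pos c); nra.
Qed.

Lemma lip_on_square_fst : lip_on_square (fun s _ => s).
Proof.
  exists 1; repeat split; [lra| |].
  - intros s t [] _; split_Rabs; lra.
  - intros; pose proof (Rabs_pos (t' - t)); lra.
Qed.

Lemma lip_on_square_snd : lip_on_square (fun _ t => t).
Proof.
  exists 1; repeat split; [lra| |].
  - intros s t _ []; split_Rabs; lra.
  - intros; pose proof (Rabs_pos (s' - s)); lra.
Qed.

Lemma lip_on_square_plus f g :
  lip_on_square f -> lip_on_square g -> lip_on_square (fun s t => f s t + g s t).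
Proof.
  intros [L1 [P1 [B1 H1]]] [L2 [P2 [B2 H2]]]; exists (L1 + L2); repeat split; [lra| |].
  - intros s t Hs Ht; specialize (B1 s t Hs Ht); specialize (B2 s t Hs Ht).
    pose proof (Rabs_triang (f s t) (g s t)); lra.
  - intros s t s' t' Hs Ht Hs' Ht'.
    specialize (H1 s t s' t' Hs Ht Hs' Ht'); specialize (H2 s t s' t' Hs Ht Hs' Ht').
    replace (f s' t' + g s' t' - (f s t + g s t))
      with ((f s' t' - f s t) + (g s' t' - g s t)) by ring.
    pose proof (Rabs_triang (f s' t' - f s t) (g s' t' - g s t)); lra.
Qed.

Lemma lip_on_square_opp f : lip_on_square f -> lip_on_square (fun s t => - f s t).
Proof.
  intros [L [P [B H]]]; exists L; repeat split; [lra| |].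
  - intros s t Hs Ht; rewrite Rabs_Ropp; auto.
  - intros; replace (- f s' t' - - f s t) with (- (f s' t' - f s t)) by ring.
    rewrite Rabs_Ropp; auto.
Qed.

Lemma lip_on_square_minus f g :
  lip_on_square f -> lip_on_square g -> lip_on_square (fun s t => f s t - g s t).
Proof. intros Hf Hg; apply (lip_on_square_plus _ _ Hf (lip_on_square_opp _ Hg)). Qed.

Lemma lip_on_square_mult f g :
  lip_on_square f -> lip_on_square g -> lip_on_square (fun s t => f s t * g s t).
Proof.
  intros [L1 [P1 [B1 H1]]] [L2 [P2 [B2 H2]]]; exists (2 * L1 * L2 + 1).
  repeat split; [nra| |].
  - intros s t Hs Ht; specialize (B1 s t Hs Ht); specialize (B2 s t Hs Ht).
    rewrite Rabs_mult; pose proof (Rabs_pos (f s t)); pose proof (Rabs_pos (g s t)); nra.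
  - intros s t s' t' Hs Ht Hs' Ht'.
    specialize (H1 s t s' t' Hs Ht Hs' Ht'); specialize (H2 s t s' t' Hs Ht Hs' Ht').
    pose proof (B1 s' t' Hs' Ht'); pose proof (B2 s t Hs Ht).
    replace (f s' t' * g s' t' - f s t * g s t)
      with (f s' t' * (g s' t' - g s t) + g s t * (f s' t' - f s t)) by ring.
    eapply Rle_trans; [apply Rabs_triang|]; rewrite !Rabs_mult.
    pose proof (Rabs_dist_ge0 s t s' t'); set (d := Rabs (s' - s) + Rabs (t' - t)) in *.
    pose proof (Rabs_pos (f s' t')); pose proof (Rabs_pos (g s t)).
    pose proof (Rabs_pos (g s' t' - g s t)); pose proof (Rabs_pos (f s' t' - f s t)).
    assert (Rabs (f s' t') * Rabs (g s' t' - g s t) <= L1 * (L2 * d))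
      by (apply Rmult_le_compat; auto).
    assert (Rabs (g s t) * Rabs (f s' t' - f s t) <= L2 * (L1 * d))
      by (apply Rmult_le_compat; auto).
    nra.
Qed.

Lemma lip_on_square_min f g :
  lip_on_square f -> lip_on_square g -> lip_on_square (fun s t => Rmin (f s t) (g s t)).
Proof.
  intros [L1 [P1 [B1 H1]]] [L2 [P2 [B2 H2]]]; exists (L1 + L2); repeat split; [lra| |].
  - intros s t Hs Ht; specialize (B1 s t Hs Ht); specialize (B2 s t Hs Ht).
    revert B1 B2; unfold Rmin; destruct Rle_dec; split_Rabs; lra.
  - intros s t s' t' Hs Ht Hs' Ht'.
    specialize (H1 s t s' t' Hs Ht Hs' Ht'); specialize (H2 s t s' t' Hs Ht Hs' Ht').
    assert (Rabs (Rmin (f s' t') (g s' t') - Rmin (f s t) (g s t))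
            <= Rabs (f s' t' - f s t) + Rabs (g s' t' - g s t))
      by (unfold Rmin; repeat destruct Rle_dec; split_Rabs; lra).
    pose proof (Rabs_dist_ge0 s t s' t'); nra.
Qed.

Ltac solve_lip_on_square :=
  repeat first [ apply lip_on_square_const | apply lip_on_square_fst
               | apply lip_on_square_snd | apply lip_on_square_minus
               | apply lip_on_square_plus | apply lip_on_square_mult
               | apply lip_on_square_min ].

Lemma lip_on_square_lt L s t s' t' eps :
  0 < L -> Rabs (s' - s) < eps / (2 * L) -> Rabs (t' - t) < eps / (2 * L) ->
  L * (Rabs (s' - s) + Rabs (t' - t)) < eps.
Proof. intros; assert (eps / (2 * L) * (2 * L) = eps) by (field; lra); nra. Qed.

(* Truncation to [[0, 1]], so that Lipschitz reparametrizations of the square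
   may be composed with maps that are only controlled on [[0, 1]]. *)
Definition clamp (z : R) : R := Rmax 0 (Rmin 1 z).

Lemma clamp_unit z : unit_I (clamp z).
Proof. unfold clamp, unit_I, Rmax, Rmin; repeat destruct Rle_dec; lra. Qed.

Lemma clamp_id z : unit_I z -> clamp z = z.
Proof. unfold clamp, unit_I, Rmax, Rmin; intros; repeat destruct Rle_dec; lra. Qed.

Lemma clamp_ge1 z : 1 <= z -> clamp z = 1.
Proof. unfold clamp, Rmax, Rmin; intros; repeat destruct Rle_dec; lra. Qed.

Lemma clamp0 : clamp 0 = 0.
Proof. apply clamp_id; unfold unit_I; lra. Qed.

Lemma clamp1 : clamp 1 = 1.
Proof. apply clamp_id; unfold unit_I; lra. Qed.

Lemma Rabs_clamp u v : Rabs (clamp u - clamp v) <= Rabs (u - v).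
Proof. unfold clamp, Rmax, Rmin; repeat destruct Rle_dec; split_Rabs; lra. Qed.

Lemma Rabs_clamp_unit u v : unit_I v -> Rabs (clamp u - v) <= Rabs (u - v).
Proof. intros Hv; rewrite <- (clamp_id v Hv) at 1; apply Rabs_clamp. Qed.

Section SquareMaps.
Variable M : TopSpace.

Lemma cont_on_square_const (c : M) : cont_on_square M (fun _ _ => c).
Proof. intros s t _ _ U _ HU; exists 1; split; [lra|]; auto. Qed.

Lemma cont_on_square_path_comp (q : R -> M) f :
  is_path M q -> lip_on_square f -> cont_on_square M (fun s t => q (clamp (f s t))).
Proof.
  intros Hq [L [HL [_ Hf]]] s t Hs Ht U HU HU0.
  destruct (Hq _ (clamp_unit (f s t)) U HU HU0) as [e [He E]].
  exists (e / (2 * L)); split; [apply Rdiv_lt_0_compat; lra|].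
  intros s' t' Hs' Ht' Ds Dt; apply E; [apply clamp_unit|].
  eapply Rle_lt_trans; [apply Rabs_clamp|].
  eapply Rle_lt_trans; [apply Hf; auto|]; now apply lip_on_square_lt.
Qed.

Lemma cont_on_square_comp (G : R -> R -> M) f g :
  cont_on_square M G -> lip_on_square f -> lip_on_square g ->
  cont_on_square M (fun s t => G (clamp (f s t)) (clamp (g s t))).
Proof.
  intros HG [L [HL [_ Hf]]] [L' [HL' [_ Hg]]] s t Hs Ht U HU HU0.
  destruct (HG _ _ (clamp_unit (f s t)) (clamp_unit (g s t)) U HU HU0) as [e [He E]].
  exists (Rmin (e / (2 * L)) (e / (2 * L'))); split.
  { apply Rmin_glb_lt; apply Rdiv_lt_0_compat; lra. }
  intros s' t' Hs' Ht' Ds Dt.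
  pose proof (Rmin_l (e / (2 * L)) (e / (2 * L'))).
  pose proof (Rmin_r (e / (2 * L)) (e / (2 * L'))).
  apply E; try apply clamp_unit; eapply Rle_lt_trans; try apply Rabs_clamp.
  - eapply Rle_lt_trans; [apply Hf; auto|]; apply lip_on_square_lt; lra.
  - eapply Rle_lt_trans; [apply Hg; auto|]; apply lip_on_square_lt; lra.
Qed.

Lemma is_path_cont_on_square_bottom (K : R -> R -> M) :
  cont_on_square M K -> is_path M (fun s => K s 0).
Proof.
  intros HK s Hs U HU HU0.
  destruct (HK s 0 Hs (conj (Rle_refl 0) Rle_0_1) U HU HU0) as [e [He E]].
  exists e; split; auto; intros s' Hs' D; apply E; auto; [split; lra|].
  now rewrite Rminus_diag, Rabs_R0.
Qed.

Definition glue (g : R -> R -> R) (K1 K2 : R -> R -> M) (s t : R) : M :=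
  if Rle_dec (g s t) 0 then K1 s t else K2 s t.

Lemma cont_on_square_glue g K1 K2 :
  lip_on_square g -> cont_on_square M K1 -> cont_on_square M K2 ->
  (forall s t, unit_I s -> unit_I t -> g s t = 0 -> K1 s t = K2 s t) ->
  cont_on_square M (glue g K1 K2).
Proof.
  intros [L [HL [_ Hg]]] H1 H2 Hagree s t Hs Ht U HU HU0; unfold glue in *.
  destruct (Rtotal_order (g s t) 0) as [Hn|[Hz|Hp]].
  - destruct (Rle_dec (g s t) 0); [|lra].
    destruct (H1 s t Hs Ht U HU HU0) as [e [He E]].
    exists (Rmin e ((- g s t) / (2 * L))); split.
    { apply Rmin_glb_lt; [lra| apply Rdiv_lt_0_compat; lra]. }
    intros s' t' Hs' Ht' Ds Dt.
    pose proof (Rmin_l e ((- g s t) / (2 * L))); pose proof (Rmin_r e ((- g s t) / (2 * L))).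
    assert (Rabs (g s' t' - g s t) < - g s t)
      by (eapply Rle_lt_trans; [apply Hg; auto| apply lip_on_square_lt; lra]).
    destruct (Rle_dec (g s' t') 0); [| split_Rabs; lra].
    apply E; auto; lra.
  - destruct (Rle_dec (g s t) 0); [|lra].
    destruct (H1 s t Hs Ht U HU HU0) as [e1 [He1 E1]].
    rewrite (Hagree s t Hs Ht Hz) in HU0.
    destruct (H2 s t Hs Ht U HU HU0) as [e2 [He2 E2]].
    exists (Rmin e1 e2); split; [apply Rmin_glb_lt; lra|].
    intros s' t' Hs' Ht' Ds Dt; pose proof (Rmin_l e1 e2); pose proof (Rmin_r e1 e2).
    destruct (Rle_dec (g s' t') 0); [apply E1 | apply E2]; auto; lra.
  - destruct (Rle_dec (g s t) 0); [lra|].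
    destruct (H2 s t Hs Ht U HU HU0) as [e [He E]].
    exists (Rmin e (g s t / (2 * L))); split.
    { apply Rmin_glb_lt; [lra| apply Rdiv_lt_0_compat; lra]. }
    intros s' t' Hs' Ht' Ds Dt.
    pose proof (Rmin_l e (g s t / (2 * L))); pose proof (Rmin_r e (g s t / (2 * L))).
    assert (Rabs (g s' t' - g s t) < g s t)
      by (eapply Rle_lt_trans; [apply Hg; auto| apply lip_on_square_lt; lra]).
    destruct (Rle_dec (g s' t') 0); [split_Rabs; lra|].
    apply E; auto; lra.
Qed.
End SquareMaps.

Definition near_seq (s0 t0 : R) (sk tk : nat -> R) : Prop :=
  forall k, unit_I (sk k) /\ unit_I (tk k) /\
    Rabs (sk k - s0) < / (INR k + 1) /\ Rabs (tk k - t0) < / (INR k + 1).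

Section SquareProducts.
Variable M : TopSpace.

Lemma cont_on_square_seq (K : R -> R -> M) :
  (forall s0 t0, unit_I s0 -> unit_I t0 -> forall U, isOpen M U -> U (K s0 t0) ->
     forall sk tk, near_seq s0 t0 sk tk -> exists k, U (K (sk k) (tk k))) ->
  cont_on_square M K.
Proof.
  intros Hseq s0 t0 Hs0 Ht0 U HU HU0; apply NNPP; intros Hno.
  assert (Hbad : forall k : nat, exists p : R * R, unit_I (fst p) /\ unit_I (snd p) /\
      Rabs (fst p - s0) < / (INR k + 1) /\ Rabs (snd p - t0) < / (INR k + 1) /\
      ~ U (K (fst p) (snd p))).
  { intros k; apply NNPP; intros Hk; apply Hno; exists (/ (INR k + 1)); split.
    { apply Rinv_0_lt_compat; pose proof (pos_INR k); lra. }
    intros s t Hs Ht Ds Dt; apply NNPP; intros HnU; apply Hk.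
    exists (s, t); simpl; auto. }
  set (p := fun k => proj1_sig (constructive_indefinite_description _ (Hbad k))).
  assert (Hp : forall k, unit_I (fst (p k)) /\ unit_I (snd (p k)) /\
      Rabs (fst (p k) - s0) < / (INR k + 1) /\ Rabs (snd (p k) - t0) < / (INR k + 1) /\
      ~ U (K (fst (p k)) (snd (p k))))
    by (intros k; exact (proj2_sig (constructive_indefinite_description _ (Hbad k)))).
  destruct (Hseq s0 t0 Hs0 Ht0 U HU HU0 (fun k => fst (p k)) (fun k => snd (p k)))
    as [k Hk]; [intros k; destruct (Hp k) as [? [? [? [? _]]]]; auto|].
  now apply (Hp k).
Qed.

Definition tent (u : R) : R := Rmin (2 * u) (2 - 2 * u).

(* A loop at [F s0 t0] that runs along the segment to [(s1, t1)] and back. *)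
Definition probe_loop (F : R -> R -> M) (s0 t0 s1 t1 u : R) : M :=
  F (clamp (s0 + tent u * (s1 - s0))) (clamp (t0 + tent u * (t1 - t0))).

Lemma probe_loop_is_loop F s0 t0 s1 t1 :
  cont_on_square M F -> unit_I s0 -> unit_I t0 ->
  is_loop M (F s0 t0) (probe_loop F s0 t0 s1 t1).
Proof.
  intros HF Hs0 Ht0; split; [|split].
  - apply (is_path_cont_on_square_bottom M (fun u _ => probe_loop F s0 t0 s1 t1 u)).
    apply cont_on_square_comp; auto; unfold tent; solve_lip_on_square.
  - unfold probe_loop, tent; rewrite Rmult_0_r, Rminus_0_r, Rmin_left by lra.
    now rewrite !Rmult_0_l, !Rplus_0_r, !clamp_id.
  - unfold probe_loop, tent; rewrite Rmult_1_r, Rminus_diag, Rmin_right by lra.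
    now rewrite !Rmult_0_l, !Rplus_0_r, !clamp_id.
Qed.

Lemma probe_loop_half F s0 t0 s1 t1 :
  unit_I s1 -> unit_I t1 -> probe_loop F s0 t0 s1 t1 (1/2) = F s1 t1.
Proof.
  intros Hs1 Ht1; unfold probe_loop, tent; rewrite Rmin_left by lra.
  replace (2 * (1/2)) with 1 by field; rewrite !Rmult_1_l.
  replace (s0 + (s1 - s0)) with s1 by ring; replace (t0 + (t1 - t0)) with t1 by ring.
  now rewrite !clamp_id.
Qed.

Lemma probe_null_seq F s0 t0 sk tk :
  cont_on_square M F -> unit_I s0 -> unit_I t0 -> near_seq s0 t0 sk tk ->
  null_seq M (F s0 t0) (fun k => probe_loop F s0 t0 (sk k) (tk k)).
Proof.
  intros HF Hs0 Ht0 Hnear; split; [intros k; now apply probe_loop_is_loop|].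
  intros U HU HU0; destruct (HF s0 t0 Hs0 Ht0 U HU HU0) as [e [He E]].
  destruct (archimed_cor1 e He) as [N [HN HN0]].
  exists N; intros n Hn u Hu; destruct (Hnear n) as [_ [_ [Ds Dt]]].
  pose proof (inv_INR_le N n HN0 Hn).
  assert (Htent : 0 <= tent u <= 1) by (unfold tent, Rmin, unit_I in *; destruct Rle_dec; lra).
  assert (Hshrink : forall a0 a1, Rabs (a1 - a0) < / (INR n + 1) ->
            Rabs (a0 + tent u * (a1 - a0) - a0) < e).
  { intros a0 a1 Da; replace (a0 + tent u * (a1 - a0) - a0) with (tent u * (a1 - a0)) by ring.
    rewrite Rabs_mult, (Rabs_right (tent u)) by lra; pose proof (Rabs_pos (a1 - a0)); nra. }
  apply E; try apply clamp_unit; eapply Rle_lt_trans;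
    try (apply Rabs_clamp_unit; assumption); now apply Hshrink.
Qed.

Variables (op : M -> M -> M).
Hypothesis op_path : forall alpha beta : R -> M, is_path M alpha -> is_path M beta ->
  is_path M (fun t => op (alpha t) (beta t)).

(* Along a sequence of points tending to [(s0, t0)], the probe loops of [F] and
   of [G] form null-sequences; the product of their infinite concatenations is
   a path, and continuity at [1] reaches the points at parameter [1/2]. *)
Lemma cont_on_square_op F G :
  cont_on_square M F -> cont_on_square M G ->
  cont_on_square M (fun s t => op (F s t) (G s t)).
Proof.
  intros HF HG; apply cont_on_square_seq; intros s0 t0 Hs0 Ht0 U HU HU0 sk tk Hnear.
  pose proof (probe_null_seq F s0 t0 sk tk HF Hs0 Ht0 Hnear) as NF.
  pose proof (probe_null_seq G s0 t0 sk tk HG Hs0 Ht0 Hnear) as NG.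
  pose proof (op_path _ _ (inf_concat_is_path _ _ _ NF) (inf_concat_is_path _ _ _ NG)) as HP.
  destruct (HP 1 (conj Rle_0_1 (Rle_refl 1)) U HU) as [e [He E]];
    [now rewrite !inf_concat_1|].
  destruct (archimed_cor1 e He) as [N [HN HN0]].
  exists N; destruct (Hnear N) as [HsN [HtN _]].
  assert (Hh : unit_I (1/2)) by (unfold unit_I; lra).
  pose proof (seg_point_in N (1/2) Hh); pose proof (seg_start_lt1 (S N)).
  pose proof (seg_start_ge0 N); pose proof (one_minus_seg_start N).
  pose proof (inv_INR_le N N HN0 (le_n N)).
  specialize (E (seg_start N + (1/2) / seg_rate N)).
  rewrite (inf_concat_seg_point M _ _ (proj1 NF) N (1/2) Hh),
    (inf_concat_seg_point M _ _ (proj1 NG) N (1/2) Hh), !probe_loop_half in E by auto.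
  apply E; [unfold unit_I; lra| split_Rabs; lra].
Qed.
End SquareProducts.

Lemma path_homotopic_ext (X : TopSpace) (a b a' b' : R -> X) :
  (forall s, unit_I s -> a s = a' s) -> (forall s, unit_I s -> b s = b' s) ->
  path_homotopic X a b -> path_homotopic X a' b'.
Proof.
  intros Ea Eb [H [HH [H0 [H1 [Hl Hr]]]]]; exists H; split; [exact HH|].
  assert (I0 : unit_I 0) by (unfold unit_I; lra).
  assert (I1 : unit_I 1) by (unfold unit_I; lra).
  repeat split; intros s Hs.
  - rewrite <- Ea; auto.
  - rewrite <- Eb; auto.
  - rewrite <- Ea; auto.
  - rewrite <- Ea; auto.
Qed.

Section Translation.
Variables (M : TopSpace) (op : M -> M -> M) (e x : M).
Hypothesis op_path : forall alpha beta : R -> M, is_path M alpha -> is_path M beta ->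
  is_path M (fun t => op (alpha t) (beta t)).
Hypothesis op_e_r : forall a, op a e = a.

Lemma is_path_const (c : M) : is_path M (fun _ => c).
Proof. intros t _ U _ HU; exists 1; split; [lra|]; auto. Qed.

Lemma inf_concat_translate alpha t :
  inf_concat M x (fun n s => op x (alpha n s)) t = op x (inf_concat M e alpha t).
Proof. unfold inf_concat; destruct (Rlt_dec t 1); [reflexivity|now rewrite op_e_r]. Qed.

(* Nullity of the translated loops is read off the continuity at [1] of the
   translated concatenation [x * prod alpha]. *)
Lemma null_seq_translate alpha :
  null_seq M e alpha -> null_seq M x (fun n s => op x (alpha n s)).
Proof.
  intros Hnull; pose proof Hnull as [Hloop _]; split.
  - intros n; destruct (Hloop n) as [Hp [H0 H1]]; split; [|split].
    + exact (op_path _ _ (is_path_const x) Hp).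
    + now rewrite H0, op_e_r.
    + now rewrite H1, op_e_r.
  - intros U HU HUx.
    pose proof (op_path _ _ (is_path_const x) (inf_concat_is_path M e alpha Hnull)) as HP.
    destruct (HP 1 (conj Rle_0_1 (Rle_refl 1)) U HU) as [eps [He E]];
      [now rewrite inf_concat_1, op_e_r|].
    destruct (archimed_cor1 eps He) as [K [HK HK0]].
    exists K; intros n Hn r Hr.
    pose proof (seg_point_in n r Hr); pose proof (seg_start_lt1 (S n)).
    pose proof (seg_start_ge0 n); pose proof (one_minus_seg_start n).
    pose proof (inv_INR_le K n HK0 Hn).
    specialize (E (seg_start n + r / seg_rate n)).
    rewrite (inf_concat_seg_point M e alpha Hloop n r Hr) in E.
    apply E; [unfold unit_I; lra| split_Rabs; lra].
Qed.

Lemma path_homotopic_translate a b :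
  path_homotopic M a b ->
  path_homotopic M (fun s => op x (a s)) (fun s => op x (b s)).
Proof.
  intros [H [HH [H0 [H1 [Hl Hr]]]]]; exists (fun s t => op x (H s t)); split.
  - exact (cont_on_square_op M op op_path _ H (cont_on_square_const M x) HH).
  - repeat split; intros; [rewrite H0| rewrite H1| rewrite Hl| rewrite Hr]; auto.
Qed.
End Translation.

Definition collar (t : R) : R := Rmin (Rmin t (1/3)) (1 - t).

Lemma collar_lo t : t <= 1/3 -> collar t = t.
Proof. unfold collar, Rmin; intros; repeat destruct Rle_dec; lra. Qed.

Lemma collar_mid t : 1/3 <= t <= 2/3 -> collar t = 1/3.
Proof. unfold collar, Rmin; intros; repeat destruct Rle_dec; lra. Qed.

Lemma collar_hi t : 2/3 <= t -> collar t = 1 - t.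
Proof. unfold collar, Rmin; intros; repeat destruct Rle_dec; lra. Qed.

Lemma collar_range t : unit_I t -> 0 <= collar t <= 1/3.
Proof. unfold collar, Rmin, unit_I; intros; repeat destruct Rle_dec; lra. Qed.

(* The homotopy [A ~ B] is built in three horizontal bands.  For [t <= 1/3]
   the loop at height [t] runs up [q] to [q (3t)] on [[0, t]], then follows
   [q (3t) * A] and runs back down [q]; at [t = 1/3] it is [q . (x * A) . q^-1],
   the band [1/3 <= t <= 2/3] applies [G : x * A ~ x * B] in the middle, and the
   last band undoes the first one with [B] in place of [A]. *)
Section Untranslation.
Variables (M : TopSpace) (op : M -> M -> M) (e x : M).
Hypothesis op_path : forall alpha beta : R -> M, is_path M alpha -> is_path M beta ->
  is_path M (fun t => op (alpha t) (beta t)).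
Hypothesis op_e_l : forall a, op e a = a.
Hypothesis op_e_r : forall a, op a e = a.
Variables (q A B : R -> M) (G : R -> R -> M).
Hypotheses (q_path : is_path M q) (q0 : q 0 = e) (q1 : q 1 = x).
Hypotheses (A_path : is_path M A) (A0 : A 0 = e) (A1 : A 1 = e).
Hypotheses (B_path : is_path M B) (B0 : B 0 = e) (B1 : B 1 = e).
Hypothesis G_cont : cont_on_square M G.
Hypotheses (G_bot : forall s, unit_I s -> G s 0 = op x (A s))
  (G_top : forall s, unit_I s -> G s 1 = op x (B s))
  (G_left : forall t, unit_I t -> G 0 t = x) (G_right : forall t, unit_I t -> G 1 t = x).

Definition core_A s t := op (q (clamp (3 * t))) (A (clamp ((s - t) * (1 + 6 * t)))).
Definition core_G s t := G (clamp (3 * s - 1)) (clamp (3 * t - 1)).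
Definition core_B s t :=
  op (q (clamp (3 - 3 * t))) (B (clamp ((s - (1 - t)) * (1 + 6 * (1 - t))))).
Definition core := glue M (fun s t => t - 1/3) core_A (glue M (fun s t => t - 2/3) core_G core_B).
Definition collar_up s (t : R) := q (clamp (3 * s)).
Definition collar_down s (t : R) := q (clamp (3 - 3 * s)).
Definition untranslation :=
  glue M (fun s t => s - collar t) collar_up
    (glue M (fun s t => 1 - collar t - s) collar_down core).

Lemma cont_on_square_core : cont_on_square M core.
Proof.
  unfold core; apply cont_on_square_glue; [solve_lip_on_square | | |].
  - apply (cont_on_square_op M op op_path);
      apply cont_on_square_path_comp; auto; solve_lip_on_square.
  - apply cont_on_square_glue; [solve_lip_on_square | | |].
    + apply (cont_on_square_comp M G (fun s t => 3 * s - 1) (fun s t => 3 * t - 1));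
        auto; solve_lip_on_square.
    + apply (cont_on_square_op M op op_path);
        apply cont_on_square_path_comp; auto; solve_lip_on_square.
    + intros s t Hs Ht Hz; assert (t = 2/3) by lra; subst t; unfold core_G, core_B.
      replace (3 * (2/3) - 1) with 1 by field; replace (3 - 3 * (2/3)) with 1 by field.
      replace ((s - (1 - 2/3)) * (1 + 6 * (1 - 2/3))) with (3 * s - 1) by field.
      rewrite clamp1, q1, G_top; auto; apply clamp_unit.
  - intros s t Hs Ht Hz; assert (t = 1/3) by lra; subst t; unfold core_A, glue.
    destruct (Rle_dec (1/3 - 2/3) 0); [|lra]; unfold core_G.
    replace (3 * (1/3) - 1) with 0 by field; replace (3 * (1/3)) with 1 by field.
    replace ((s - 1/3) * (1 + 6 * (1/3))) with (3 * s - 1) by field.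
    rewrite clamp1, clamp0, q1, G_bot; auto; apply clamp_unit.
Qed.

Lemma collar_down_core s t : unit_I t -> s = 1 - collar t -> collar_down s t = core s t.
Proof.
  intros Ht ->; unfold collar_down, core, glue.
  destruct (Rle_dec (t - 1/3) 0).
  - rewrite collar_lo by lra; unfold core_A.
    replace (3 - 3 * (1 - t)) with (3 * t) by ring.
    rewrite (clamp_ge1 ((1 - t - t) * (1 + 6 * t))) by (destruct Ht; nra).
    now rewrite A1, op_e_r.
  - destruct (Rle_dec (t - 2/3) 0).
    + rewrite collar_mid by lra; unfold core_G.
      replace (3 * (1 - 1/3) - 1) with 1 by field.
      replace (3 - 3 * (1 - 1/3)) with 1 by field.
      rewrite clamp1, q1, G_right; auto; apply clamp_unit.
    + rewrite collar_hi by lra; unfold core_B; replace (1 - (1 - t)) with t by ring.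
      rewrite (clamp_ge1 ((t - (1 - t)) * (1 + 6 * (1 - t)))) by (destruct Ht; nra).
      now rewrite B1, op_e_r.
Qed.

Lemma collar_up_core s t : unit_I t -> s = collar t -> collar_up s t = core s t.
Proof.
  intros Ht ->; unfold collar_up, core, glue.
  destruct (Rle_dec (t - 1/3) 0).
  - rewrite collar_lo by lra; unfold core_A.
    rewrite Rminus_diag, Rmult_0_l, clamp0; now rewrite A0, op_e_r.
  - destruct (Rle_dec (t - 2/3) 0).
    + rewrite collar_mid by lra; unfold core_G.
      replace (3 * (1/3) - 1) with 0 by field; replace (3 * (1/3)) with 1 by field.
      rewrite clamp0, clamp1, q1, G_left; auto; apply clamp_unit.
    + rewrite collar_hi by lra; unfold core_B.
      rewrite Rminus_diag, Rmult_0_l, clamp0.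
      replace (3 * (1 - t)) with (3 - 3 * t) by ring; now rewrite B0, op_e_r.
Qed.

Lemma cont_on_square_untranslation : cont_on_square M untranslation.
Proof.
  unfold untranslation; apply cont_on_square_glue; [unfold collar; solve_lip_on_square| | |].
  - apply cont_on_square_path_comp; auto; solve_lip_on_square.
  - apply cont_on_square_glue; [unfold collar; solve_lip_on_square| | apply cont_on_square_core|].
    + apply cont_on_square_path_comp; auto; solve_lip_on_square.
    + intros s t Hs Ht Hz; apply collar_down_core; auto; lra.
  - intros s t Hs Ht Hz; pose proof (collar_range t Ht); unfold glue.
    destruct (Rle_dec (1 - collar t - s) 0); [lra|].
    apply collar_up_core; auto; lra.
Qed.

Lemma untranslation_homotopic : path_homotopic M A B.
Proof.
  exists untranslation; split; [apply cont_on_square_untranslation|].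
  split; [|split; [|split]].
  - intros s Hs; unfold untranslation, glue; rewrite collar_lo by lra.
    destruct (Rle_dec (s - 0) 0).
    + assert (s = 0) by (destruct Hs; lra); subst s; unfold collar_up.
      now rewrite Rmult_0_r, clamp0, q0, A0.
    + destruct (Rle_dec (1 - 0 - s) 0).
      * assert (s = 1) by (destruct Hs; lra); subst s; unfold collar_down.
        replace (3 - 3 * 1) with 0 by ring; now rewrite clamp0, q0, A1.
      * unfold core, glue; destruct (Rle_dec (0 - 1/3) 0); [|lra]; unfold core_A.
        rewrite Rmult_0_r, Rminus_0_r, Rmult_0_r, Rplus_0_r, Rmult_1_r.
        now rewrite clamp0, q0, op_e_l, clamp_id.
  - intros s Hs; unfold untranslation, glue; rewrite collar_hi by lra.
    rewrite Rminus_diag, !Rminus_0_r.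
    destruct (Rle_dec s 0).
    + assert (s = 0) by (destruct Hs; lra); subst s; unfold collar_up.
      now rewrite Rmult_0_r, clamp0, q0, B0.
    + destruct (Rle_dec (1 - s) 0).
      * assert (s = 1) by (destruct Hs; lra); subst s; unfold collar_down.
        replace (3 - 3 * 1) with 0 by ring; now rewrite clamp0, q0, B1.
      * unfold core, glue; destruct (Rle_dec (1 - 1/3) 0); [lra|].
        destruct (Rle_dec (1 - 2/3) 0); [lra|]; unfold core_B.
        replace (3 - 3 * 1) with 0 by ring.
        replace ((s - (1 - 1)) * (1 + 6 * (1 - 1))) with s by ring.
        now rewrite clamp0, q0, op_e_l, clamp_id.
  - intros t Ht; pose proof (collar_range t Ht); unfold untranslation, glue.
    destruct (Rle_dec (0 - collar t) 0); [|lra]; unfold collar_up.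
    now rewrite Rmult_0_r, clamp0, q0, A0.
  - intros t Ht; pose proof (collar_range t Ht); unfold untranslation, glue.
    destruct (Rle_dec (1 - collar t) 0); [lra|].
    destruct (Rle_dec (1 - collar t - 1) 0); [|lra]; unfold collar_down.
    replace (3 - 3 * 1) with 0 by ring; now rewrite clamp0, q0, A1.
Qed.
End Untranslation.

Lemma path_homotopic_untranslate (M : TopSpace) (op : M -> M -> M) (e x : M)
  (q A B : R -> M) :
  (forall alpha beta : R -> M, is_path M alpha -> is_path M beta ->
     is_path M (fun t => op (alpha t) (beta t))) ->
  (forall a, op e a = a) -> (forall a, op a e = a) ->
  is_path M q -> q 0 = e -> q 1 = x -> is_loop M e A -> is_loop M e B ->
  path_homotopic M (fun s => op x (A s)) (fun s => op x (B s)) ->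
  path_homotopic M A B.
Proof.
  intros op_path op_e_l op_e_r Hq q0 q1 [HA [A0 A1]] [HB [B0 B1]]
    [G [HG [G_bot [G_top [G_left G_right]]]]].
  apply (untranslation_homotopic M op e x op_path op_e_l op_e_r q A B G); auto.
  - intros t Ht; rewrite G_left, A0; auto.
  - intros t Ht; rewrite G_right, A1; auto.
Qed.

Theorem mainTheorem13 (M : TopSpace) (op : M -> M -> M) (e : M) :
  pre_delta_monoid M op e -> path_connected M ->
  ~ wd_inf_products M e -> forall x : M, ~ wd_inf_products M x.
Proof.
  intros [_ [op_e_l [op_e_r op_path]]] Hconn Hnot_e x Hwd_x; apply Hnot_e.
  intros alpha beta Halpha Hbeta Hhom.
  destruct (Hconn e x) as [q [Hq [q0 q1]]].
  apply (path_homotopic_untranslate M op e x q); auto using inf_concat_is_loop.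
  apply (path_homotopic_ext M
           (inf_concat M x (fun n s => op x (alpha n s)))
           (inf_concat M x (fun n s => op x (beta n s))));
    [intros; apply inf_concat_translate; auto .. |].
  apply Hwd_x; [apply (null_seq_translate M op e) .. |]; auto.
  intros n; apply path_homotopic_translate; auto.
Qed.
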